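(* Let $\varepsilon>0$ and let $\tau\in F_2$ with $\operatorname{Im}\tau_{12}\ge\varepsilon$ and $\operatorname{Im}\tau_1\ge\max\{1/\varepsilon,31\}$. Let $a=(\tfrac12,\tfrac12)$ and $b=(0,0)$ or $b=(\tfrac12,\tfrac12)$. Then $$|\theta_{a,b}(0,\tau)|\,e^{\pi\,{}^ta\operatorname{Im}\tau\,a}\ge\min\{\varepsilon/2,\ 0{,}31\}.$$
   Context: $F_2$ is the standard Siegel fundamental domain for $\mathrm{Sp}_4(\mathbb{Z})$ acting on symmetric complex $2\times2$ matrices $\tau=\begin{pmatrix}\tau_1&\tau_{12}\\ \tau_{12}&\tau_2\end{pmatrix}$ with $\operatorname{Im}\tau>0$; every $\tau\in F_2$ satisfies $|\operatorname{Re}\tau_{ij}|\le 1/2$, $\operatorname{Im}\tau_2\ge\operatorname{Im}\tau_1\ge 2\operatorname{Im}\tau_{12}\ge 0$, $\operatorname{Im}\tau_1\ge\sqrt3/2$. $\theta_{a,b}(Z,\tau)=\sum_{n\in\mathbb{Z}^2}\exp\big(2i\pi(\tfrac12{}^t(n+a)\tau(n+a)+{}^t(n+a)(Z+b))\big)$. *)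

From Stdlib Require Import Reals Lra ZArith.
Open Scope R_scope.

Record Cx := mkCx { cre : R; cim : R }.
Definition cadd (z w : Cx) : Cx := mkCx (cre z + cre w) (cim z + cim w).
Definition csub (z w : Cx) : Cx := mkCx (cre z - cre w) (cim z - cim w).
Definition cmul (z w : Cx) : Cx :=
  mkCx (cre z * cre w - cim z * cim w) (cre z * cim w + cim z * cre w).
Definition cofR (x : R) : Cx := mkCx x 0.
Definition cnorm (z : Cx) : R := sqrt (cre z * cre z + cim z * cim z).
Definition cexp (z : Cx) : Cx :=
  mkCx (exp (cre z) * cos (cim z)) (exp (cre z) * sin (cim z)).
Definition ci : Cx := mkCx 0 1.

Record Sym2 := mkSym2 { t1 : Cx; t12 : Cx; t2 : Cx }.
Definition tau_entry (t : Sym2) (i j : nat) : Cx :=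
  match i, j with
  | 1%nat, 1%nat => t1 t
  | 2%nat, 2%nat => t2 t
  | _, _ => t12 t
  end.

(* Siegel upper half space H_2: Im tau positive definite *)
Definition in_H2 (t : Sym2) : Prop :=
  0 < cim (t1 t) /\ cim (t1 t) * cim (t2 t) - cim (t12 t) * cim (t12 t) > 0.

Record Zmat2 := mkZmat2 { m11 : Z; m12 : Z; m21 : Z; m22 : Z }.
Definition zentry (M : Zmat2) (i j : nat) : Z :=
  match i, j with
  | 1%nat, 1%nat => m11 M | 1%nat, _ => m12 M
  | _, 1%nat => m21 M | _, _ => m22 M
  end.
Definition ztr (M : Zmat2) : Zmat2 := mkZmat2 (m11 M) (m21 M) (m12 M) (m22 M).
Definition zmul (M N : Zmat2) : Zmat2 :=
  mkZmat2 (m11 M * m11 N + m12 M * m21 N)%Z (m11 M * m12 N + m12 M * m22 N)%Z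
          (m21 M * m11 N + m22 M * m21 N)%Z (m21 M * m12 N + m22 M * m22 N)%Z.
Definition zsub (M N : Zmat2) : Zmat2 :=
  mkZmat2 (m11 M - m11 N)%Z (m12 M - m12 N)%Z (m21 M - m21 N)%Z (m22 M - m22 N)%Z.
Definition zid : Zmat2 := mkZmat2 1 0 0 1.

(* M = [[A,B],[C,D]] is in Sp_4(Z), i.e. M^T J M = J with J = [[0,I],[-I,0]],
   written out blockwise:  A^T C = C^T A,  B^T D = D^T B,  A^T D - C^T B = I. *)
Definition symplecticZ (A B C D : Zmat2) : Prop :=
  zmul (ztr A) C = zmul (ztr C) A /\
  zmul (ztr B) D = zmul (ztr D) B /\
  zsub (zmul (ztr A) D) (zmul (ztr C) B) = zid.

Definition CtauD_entry (C D : Zmat2) (t : Sym2) (i j : nat) : Cx :=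
  cadd (cadd (cmul (cofR (IZR (zentry C i 1))) (tau_entry t 1 j))
             (cmul (cofR (IZR (zentry C i 2))) (tau_entry t 2 j)))
       (cofR (IZR (zentry D i j))).
Definition det_CtauD (C D : Zmat2) (t : Sym2) : Cx :=
  csub (cmul (CtauD_entry C D t 1 1) (CtauD_entry C D t 2 2))
       (cmul (CtauD_entry C D t 1 2) (CtauD_entry C D t 2 1)).

Definition in_F2 (t : Sym2) : Prop :=
  in_H2 t /\
  (forall A B C D : Zmat2, symplecticZ A B C D -> cnorm (det_CtauD C D t) >= 1) /\
  (* Im tau Minkowski reduced *)
  (0 <= 2 * cim (t12 t) /\ 2 * cim (t12 t) <= cim (t1 t) /\ cim (t1 t) <= cim (t2 t)) /\
  (Rabs (cre (t1 t)) <= 1/2 /\ Rabs (cre (t12 t)) <= 1/2 /\ Rabs (cre (t2 t)) <= 1/2).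

(* summand of theta_{a,b}(Z,tau) at n = (n1,n2):
   exp(2 i pi ( 1/2 (n+a)^T tau (n+a) + (n+a)^T (Z + b) )) *)
Definition theta_term (a1 a2 b1 b2 : R) (z1 z2 : Cx) (t : Sym2) (n1 n2 : Z) : Cx :=
  let v1 := IZR n1 + a1 in
  let v2 := IZR n2 + a2 in
  let quad := cadd (cadd (cmul (cofR (v1 * v1)) (t1 t))
                         (cmul (cofR (2 * v1 * v2)) (t12 t)))
                   (cmul (cofR (v2 * v2)) (t2 t)) in
  let lin := cadd (cmul (cofR v1) (cadd z1 (cofR b1)))
                  (cmul (cofR v2) (cadd z2 (cofR b2))) in
  cexp (cmul (cmul (cofR (2 * PI)) ci) (cadd (cmul (cofR (1/2)) quad) lin)).

Fixpoint csum (f : nat -> Cx) (m : nat) : Cx :=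
  match m with
  | O => cofR 0
  | S m' => cadd (csum f m') (f m')
  end.

(* partial sum over the square  -N <= n1, n2 <= N *)
Definition theta_partial (a1 a2 b1 b2 : R) (z1 z2 : Cx) (t : Sym2) (N : nat) : Cx :=
  csum (fun i => csum (fun j =>
          theta_term a1 a2 b1 b2 z1 z2 t (Z.of_nat i - Z.of_nat N)%Z (Z.of_nat j - Z.of_nat N)%Z)
        (2 * N + 1)) (2 * N + 1).

(* l is the value of theta_{a,b}(Z,tau): limit of the symmetric square partial sums
   (the series converges absolutely on H_2, so this is its sum). *)
Definition theta_value (a1 a2 b1 b2 : R) (z1 z2 : Cx) (t : Sym2) (l : Cx) : Prop :=
  Un_cv (fun N => cre (theta_partial a1 a2 b1 b2 z1 z2 t N)) (cre l) /\
  Un_cv (fun N => cim (theta_partial a1 a2 b1 b2 z1 z2 t N)) (cim l).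

From Stdlib Require Import Reals Lra Lia Psatz ZArith.
Open Scope R_scope.

(** Write [Y = Im tau = [[y1, s], [s, y2]]] and [K = exp(pi a^T Y a)].  The two
    terms of the series at [n = (0,-1)] and [n = (-1,0)] coincide, equal to
    some [u] with [K |u| = exp(pi s)]; in general the term at [n] has modulus
    [exp(-pi x^T Y x)] with [x = n + a].
    1. A projection argument ([double_sum_repeated_term]) gives, for every
       square partial sum [S_N], [|S_N| >= 4 |u| - sum |terms|].
    2. Since [Y] is Minkowski reduced, [K |term|] is at most a product of
       geometric weights [Q^(k1+k2)], [Q = exp(-pi y1)], times [exp(pi s)] when
       the two coordinates of [n] have opposite signs
       ([scaled_term_le_weights]); summing the weights bounds [K sum |terms|].
    3. An explicit numerical estimate ([dominance_margin]) shows
       [K |S_N| >= min(eps/2, 0.31)], and the bound passes to the limit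
       ([cnorm_limit_lower]), which is the value of the theta function. *)

Fixpoint rsum (f : nat -> R) (m : nat) : R :=
  match m with O => 0 | S m' => rsum f m' + f m' end.

Lemma rsum_ext (f g : nat -> R) (m : nat) :
  (forall k, (k < m)%nat -> f k = g k) -> rsum f m = rsum g m.
Proof.
  induction m as [|m IH]; intros Hfg; simpl; [reflexivity|].
  rewrite IH by (intros; apply Hfg; lia). rewrite (Hfg m) by lia. reflexivity.
Qed.

Lemma rsum_le (f g : nat -> R) (m : nat) :
  (forall k, (k < m)%nat -> f k <= g k) -> rsum f m <= rsum g m.
Proof.
  induction m as [|m IH]; intros Hfg; simpl; [lra|].
  assert (rsum f m <= rsum g m) by (apply IH; intros; apply Hfg; lia).
  assert (f m <= g m) by (apply Hfg; lia). lra.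
Qed.

Lemma rsum_nonneg (f : nat -> R) (m : nat) :
  (forall k, 0 <= f k) -> 0 <= rsum f m.
Proof.
  intros Hf; induction m as [|m IH]; simpl; [lra|]. specialize (Hf m). lra.
Qed.

Lemma rsum_ge_term (f : nat -> R) (m k : nat) :
  (forall i, 0 <= f i) -> (k < m)%nat -> f k <= rsum f m.
Proof.
  intros Hf; induction m as [|m IH]; intros Hk; simpl; [lia|].
  destruct (Nat.eq_dec k m) as [->|Hne].
  - pose proof (rsum_nonneg f m Hf). lra.
  - assert (f k <= rsum f m) by (apply IH; lia). specialize (Hf m). lra.
Qed.

Lemma rsum_ge_two_terms (f : nat -> R) (m k l : nat) :
  (forall i, 0 <= f i) -> (k < m)%nat -> (l < m)%nat -> k <> l ->
  f k + f l <= rsum f m.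
Proof.
  intros Hf; induction m as [|m IH]; intros Hk Hl Hkl; simpl; [lia|].
  destruct (Nat.eq_dec k m) as [->|Hk'].
  - pose proof (rsum_ge_term f m l Hf ltac:(lia)). lra.
  - destruct (Nat.eq_dec l m) as [->|Hl'].
    + pose proof (rsum_ge_term f m k Hf ltac:(lia)). lra.
    + assert (f k + f l <= rsum f m) by (apply IH; lia). specialize (Hf m). lra.
Qed.

Lemma rsum_plus (f g : nat -> R) (m : nat) :
  rsum (fun k => f k + g k) m = rsum f m + rsum g m.
Proof. induction m as [|m IH]; simpl; [ring|]. rewrite IH. ring. Qed.

Lemma rsum_scal (c : R) (f : nat -> R) (m : nat) :
  rsum (fun k => c * f k) m = c * rsum f m.
Proof. induction m as [|m IH]; simpl; [ring|]. rewrite IH. ring. Qed.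

(** Expansion of a double sum of the bilinear expression that arises from
    splitting each index into a "nonnegative" and a "negative" part. *)
Lemma rsum2_split (P M : nat -> R) (E : R) (m : nat) :
  rsum (fun i => rsum (fun j => P i * P j + M i * M j + E * (P i * M j + M i * P j)) m) m
  = rsum P m * rsum P m + rsum M m * rsum M m + E * (2 * (rsum P m * rsum M m)).
Proof.
  assert (Hrow : forall i k,
    rsum (fun j => P i * P j + M i * M j + E * (P i * M j + M i * P j)) k
    = P i * rsum P k + M i * rsum M k + E * (P i * rsum M k + M i * rsum P k)).
  { intros i k; induction k as [|k IH]; simpl; [ring|]. rewrite IH. ring. }
  rewrite (rsum_ext _ (fun i => P i * rsum P m + M i * rsum M m
                                + E * (P i * rsum M m + M i * rsum P m)))
    by (intros; apply Hrow).
  assert (Hcol : forall A B k,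
    rsum (fun i => P i * A + M i * B + E * (P i * B + M i * A)) k
    = rsum P k * A + rsum M k * B + E * (rsum P k * B + rsum M k * A)).
  { intros A B k; induction k as [|k IH]; simpl; [ring|]. rewrite IH. ring. }
  rewrite Hcol. ring.
Qed.

Definition rdot (u z : Cx) : R := cre u * cre z + cim u * cim z.

Lemma rdot_csum (u : Cx) (f : nat -> Cx) (m : nat) :
  rdot u (csum f m) = rsum (fun k => rdot u (f k)) m.
Proof.
  induction m as [|m IH]; simpl; unfold rdot in *; simpl; [ring|].
  rewrite <- IH. ring.
Qed.

Lemma cnorm_nonneg (z : Cx) : 0 <= cnorm z.
Proof. apply sqrt_pos. Qed.

Lemma rdot_self (u : Cx) : rdot u u = cnorm u * cnorm u.
Proof. unfold rdot, cnorm. rewrite sqrt_sqrt; nra. Qed.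

Lemma rdot_cauchy_schwarz (u z : Cx) :
  - (cnorm u * cnorm z) <= rdot u z <= cnorm u * cnorm z.
Proof.
  enough (Habs : Rabs (rdot u z) <= cnorm u * cnorm z).
  { pose proof (Rle_abs (rdot u z)). pose proof (Rle_abs (- rdot u z)).
    rewrite Rabs_Ropp in *. lra. }
  unfold cnorm.
  rewrite <- sqrt_mult_alt by nra. rewrite <- sqrt_Rsqr_abs.
  apply sqrt_le_1_alt. unfold rdot, Rsqr.
  destruct u as [a b], z as [c d]; simpl.
  pose proof (Rle_0_sqr (a * d - b * c)). unfold Rsqr in *. nra.
Qed.

Lemma cnorm_cexp (z : Cx) : cnorm (cexp z) = exp (cre z).
Proof.
  unfold cnorm, cexp; simpl. pose proof (sin2_cos2 (cim z)) as Hpyth. unfold Rsqr in Hpyth.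
  replace (_ + _) with (exp (cre z) * exp (cre z))
    by (transitivity (exp (cre z) * exp (cre z) * (sin (cim z) * sin (cim z) + cos (cim z) * cos (cim z)));
        [rewrite Hpyth; ring | ring]).
  apply sqrt_square. left; apply exp_pos.
Qed.

(** It is
    proved by projecting on [u]: every term [z] satisfies <u,z> + |u||z| >= 0,
    and the two copies of [u] contribute 2|u|^2 each. *)
Lemma double_sum_repeated_term (T : nat -> nat -> Cx) (m i0 j0 i1 j1 : nat) :
  (i0 < m)%nat -> (j0 < m)%nat -> (i1 < m)%nat -> (j1 < m)%nat -> i0 <> i1 ->
  T i1 j1 = T i0 j0 ->
  4 * cnorm (T i0 j0) - rsum (fun i => rsum (fun j => cnorm (T i j)) m) m
  <= cnorm (csum (fun i => csum (T i) m) m).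
Proof.
  intros Hi0 Hj0 Hi1 Hj1 Hne Hrep.
  set (u := T i0 j0) in *. set (nu := cnorm u).
  set (S := csum (fun i => csum (T i) m) m).
  set (TT := rsum (fun i => rsum (fun j => cnorm (T i j)) m) m).
  set (g := fun i j => rdot u (T i j) + nu * cnorm (T i j)).
  assert (Hg : forall i j, 0 <= g i j)
    by (intros; pose proof (rdot_cauchy_schwarz u (T i j)); unfold g, nu; lra).
  assert (Hproj : rdot u S + nu * TT = rsum (fun i => rsum (g i) m) m).
  { unfold S, TT. rewrite rdot_csum, <- rsum_scal, <- rsum_plus.
    apply rsum_ext; intros i _. rewrite rdot_csum, <- rsum_scal, <- rsum_plus. reflexivity. }
  assert (Hpair : 4 * (nu * nu) <= rsum (fun i => rsum (g i) m) m).
  { assert (Hrow : forall i k, (k < m)%nat -> g i k <= rsum (g i) m)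
      by (intros; apply rsum_ge_term; auto).
    pose proof (rsum_ge_two_terms (fun i => rsum (g i) m) m i0 i1
                  (fun i => rsum_nonneg (g i) m (Hg i)) Hi0 Hi1 Hne).
    assert (Hu0 : g i0 j0 = 2 * (nu * nu)) by (unfold g; fold u; rewrite rdot_self; fold nu; ring).
    assert (Hu1 : g i1 j1 = 2 * (nu * nu)) by (rewrite <- Hu0; unfold g; rewrite Hrep; reflexivity).
    pose proof (Hrow i0 j0 Hj0). pose proof (Hrow i1 j1 Hj1). lra. }
  pose proof (rdot_cauchy_schwarz u S) as HCS. fold nu in HCS.
  assert (HTT : 0 <= TT) by (apply rsum_nonneg; intros; apply rsum_nonneg; intros; apply cnorm_nonneg).
  pose proof (cnorm_nonneg S).
  assert (Hnu : 0 <= nu) by apply cnorm_nonneg.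
  destruct (Req_dec nu 0) as [Hnu0|Hnu0]; [rewrite Hnu0; lra|].
  apply (Rmult_le_reg_l nu); [lra|].
  replace (nu * (4 * nu - TT)) with (4 * (nu * nu) - nu * TT) by ring. lra.
Qed.

Lemma exp_le_compat (x y : R) : x <= y -> exp x <= exp y.
Proof. intros [Hlt|Heq]; [left; apply exp_increasing; exact Hlt | rewrite Heq; lra]. Qed.

Lemma exp_pow (x : R) (k : nat) : exp x ^ k = exp (x * INR k).
Proof.
  induction k as [|k IH]; [simpl; rewrite Rmult_0_r, exp_0; reflexivity|].
  rewrite S_INR. simpl. rewrite IH, <- exp_plus. f_equal. ring.
Qed.

Lemma geom_sum_bound (Q : R) (n : nat) :
  0 <= Q < 1 -> 0 <= rsum (pow Q) n <= 1 / (1 - Q).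
Proof.
  intros HQ.
  assert (Htele : rsum (pow Q) n * (1 - Q) = 1 - Q ^ n)
    by (induction n as [|n IH]; simpl; [ring | rewrite Rmult_plus_distr_r, IH; ring]).
  assert (Hpos : forall k, 0 <= Q ^ k) by (intros; apply pow_le; lra).
  pose proof (Hpos n). split; [apply rsum_nonneg; exact Hpos|].
  apply (Rmult_le_reg_r (1 - Q)); [lra|]. unfold Rdiv. rewrite Htele, Rmult_assoc, Rinv_l; lra.
Qed.

(** Lattice coordinate [n = i - N] of the [i]-th index of a square partial sum
    of side [2N+1].  Then [n + 1/2 = +-(k + 1/2)] with [k = n] for [n >= 0] and
    [k = -n-1] for [n < 0]; the geometric weight [Q^k] is recorded in [wplus]
    or [wminus] according to the sign of [n]. *)
Definition lattice (N i : nat) : Z := (Z.of_nat i - Z.of_nat N)%Z.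

Definition wplus (Q : R) (N i : nat) : R := if (N <=? i)%nat then Q ^ (i - N) else 0.
Definition wminus (Q : R) (N i : nat) : R := if (i <? N)%nat then Q ^ (N - 1 - i) else 0.

Lemma lattice_cases (Q : R) (N i : nat) :
  (wplus Q N i = Q ^ (i - N) /\ wminus Q N i = 0 /\ IZR (lattice N i) = INR (i - N))
  \/ (wplus Q N i = 0 /\ wminus Q N i = Q ^ (N - 1 - i)
      /\ IZR (lattice N i) = - INR (N - 1 - i) - 1).
Proof.
  unfold wplus, wminus, lattice. rewrite !INR_IZR_INZ. destruct (le_lt_dec N i) as [Hle|Hlt].
  - left. rewrite (proj2 (Nat.leb_le N i) Hle), (proj2 (Nat.ltb_ge i N) Hle).
    repeat split. f_equal. lia.
  - right. rewrite (proj2 (Nat.leb_gt N i) Hlt), (proj2 (Nat.ltb_lt i N) Hlt).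
    repeat split. rewrite <- opp_IZR, <- minus_IZR. f_equal. lia.
Qed.

Lemma wplus_sum (Q : R) (N M : nat) : rsum (wplus Q N) M = rsum (pow Q) (M - N).
Proof.
  induction M as [|M IH]; [reflexivity|]. cbn [rsum]. rewrite IH. unfold wplus.
  destruct (le_lt_dec N M) as [Hle|Hlt].
  - rewrite (proj2 (Nat.leb_le N M) Hle). replace (S M - N)%nat with (S (M - N)) by lia.
    reflexivity.
  - rewrite (proj2 (Nat.leb_gt N M) Hlt). replace (S M - N)%nat with (M - N)%nat by lia. ring.
Qed.

Lemma wminus_sum (Q : R) (N M : nat) :
  rsum (wminus Q N) M = rsum (pow Q) N - rsum (pow Q) (N - M).
Proof.
  induction M as [|M IH]; [rewrite Nat.sub_0_r; simpl; ring|]. cbn [rsum]. rewrite IH. unfold wminus.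
  destruct (le_lt_dec N M) as [Hle|Hlt].
  - rewrite (proj2 (Nat.ltb_ge M N) Hle). replace (N - S M)%nat with (N - M)%nat by lia. ring.
  - rewrite (proj2 (Nat.ltb_lt M N) Hlt). replace (N - M)%nat with (S (N - S M)) by lia.
    replace (N - 1 - M)%nat with (N - S M)%nat by lia. simpl. ring.
Qed.

Lemma weight_sums_bound (Q : R) (N M : nat) :
  0 <= Q < 1 ->
  (0 <= rsum (wplus Q N) M <= 1 / (1 - Q)) /\ (0 <= rsum (wminus Q N) M <= 1 / (1 - Q)).
Proof.
  intros HQ. split; [rewrite wplus_sum; apply geom_sum_bound; exact HQ|].
  assert (Hpos : forall i, 0 <= wminus Q N i)
    by (intros; unfold wminus; destruct (i <? N)%nat; [apply pow_le|]; lra).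
  pose proof (rsum_nonneg _ M Hpos). rewrite wminus_sum in *.
  pose proof (geom_sum_bound Q N HQ). pose proof (geom_sum_bound Q (N - M) HQ). lra.
Qed.

Definition qform (y1 s y2 x1 x2 : R) : R := x1 * x1 * y1 + 2 * x1 * x2 * s + x2 * x2 * y2.

Lemma qform_opp (y1 s y2 x1 x2 : R) : qform y1 s y2 (- x1) (- x2) = qform y1 s y2 x1 x2.
Proof. unfold qform. ring. Qed.

Lemma qform_excess_same (y1 s y2 k1 k2 : R) :
  0 <= s -> 2 * s <= y1 -> y1 <= y2 -> 0 <= k1 -> 0 <= k2 ->
  y1 * (k1 + k2) <= qform y1 s y2 (k1 + 1/2) (k2 + 1/2) - qform y1 s y2 (1/2) (1/2).
Proof.
  intros Hs Hs2 Hy Hk1 Hk2. unfold qform.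
  assert (Hy1 : 0 <= y1) by lra.
  pose proof (Rmult_le_pos _ _ Hy1 (Rmult_le_pos _ _ Hk1 Hk1)).
  pose proof (Rmult_le_pos _ _ Hs (Rmult_le_pos _ _ Hk1 Hk2)).
  pose proof (Rmult_le_pos _ _ Hs Hk1). pose proof (Rmult_le_pos _ _ Hs Hk2).
  pose proof (Rmult_le_pos (y2 - y1) (k2 * k2 + k2) ltac:(lra) ltac:(nra)).
  pose proof (Rmult_le_pos _ _ Hy1 (Rmult_le_pos _ _ Hk2 Hk2)).
  nra.
Qed.

Lemma qform_excess_opposite (y1 s y2 k1 k2 : R) :
  0 <= s -> 2 * s <= y1 -> y1 <= y2 -> 0 <= k1 -> 0 <= k2 ->
  k1 <= k1 * k1 -> k2 <= k2 * k2 ->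
  y1 * (k1 + k2) - s
  <= qform y1 s y2 (k1 + 1/2) (- (k2 + 1/2)) - qform y1 s y2 (1/2) (1/2).
Proof.
  intros Hs Hs2 Hy Hk1 Hk2 Hn1 Hn2. unfold qform.
  assert (Hy1 : 0 <= y1) by lra.
  pose proof (Rmult_le_pos _ _ Hy1 (Rle_0_sqr (k1 - k2))). unfold Rsqr in *.
  pose proof (Rmult_le_pos y1 (k1 * k1 - k1) Hy1 ltac:(lra)).
  pose proof (Rmult_le_pos y1 (k2 * k2 - k2) Hy1 ltac:(lra)).
  pose proof (Rmult_le_pos (y1 - 2 * s) (k1 * k2 + (k1 + k2) / 2) ltac:(lra) ltac:(nra)).
  pose proof (Rmult_le_pos (y2 - y1) (k2 * k2 + k2) ltac:(lra) ltac:(nra)).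
  nra.
Qed.

Lemma INR_le_square (k : nat) : INR k <= INR k * INR k.
Proof. destruct k as [|k]; [simpl; lra|]. rewrite S_INR. pose proof (pos_INR k). nra. Qed.

Lemma exp_excess_le (y1 c D : R) (k1 k2 : nat) :
  y1 * (INR k1 + INR k2) - c <= D ->
  exp (- (PI * D)) <= exp (PI * c) * (exp (- (PI * y1)) ^ k1 * exp (- (PI * y1)) ^ k2).
Proof.
  intros HD. rewrite !exp_pow, <- !exp_plus. apply exp_le_compat.
  apply (Rmult_le_compat_l PI) in HD; [|pose proof PI_RGT_0; lra]. nra.
Qed.

Lemma scaled_term_le_weights (y1 s y2 Q : R) (N i j : nat) :
  0 <= s -> 2 * s <= y1 -> y1 <= y2 -> Q = exp (- (PI * y1)) ->
  exp (PI * qform y1 s y2 (1/2) (1/2))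
  * exp (- (PI * qform y1 s y2 (IZR (lattice N i) + 1/2) (IZR (lattice N j) + 1/2)))
  <= wplus Q N i * wplus Q N j + wminus Q N i * wminus Q N j
     + exp (PI * s) * (wplus Q N i * wminus Q N j + wminus Q N i * wplus Q N j).
Proof.
  intros Hs Hs2 Hy HQ. set (qa := qform y1 s y2 (1/2) (1/2)).
  rewrite <- exp_plus.
  match goal with |- exp (_ + - (PI * ?qx)) <= _ =>
    replace (PI * qa + - (PI * qx)) with (- (PI * (qx - qa))) by ring end.
  unfold qa.
  destruct (lattice_cases Q N i) as [[P1 [M1 X1]] | [P1 [M1 X1]]];
  destruct (lattice_cases Q N j) as [[P2 [M2 X2]] | [P2 [M2 X2]]];
  rewrite P1, M1, P2, M2, X1, X2, HQ;
  match goal with |- context [exp (- (PI * y1)) ^ ?a * exp (- (PI * y1)) ^ ?b] =>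
    set (k1 := a); set (k2 := b) end;
  pose proof (pos_INR k1) as Hk1; pose proof (pos_INR k2) as Hk2;
  pose proof (INR_le_square k1) as Hn1; pose proof (INR_le_square k2) as Hn2.
  (* Sign patterns (+,+), (+,-), (-,+), (-,-); the form is even, so (-,-)
     reduces to (+,+) and (-,+) to (+,-). *)
  - apply (Rle_trans _ (exp (PI * 0) * (exp (- (PI * y1)) ^ k1 * exp (- (PI * y1)) ^ k2)));
      [| right; rewrite Rmult_0_r, exp_0; ring].
    apply exp_excess_le.
    pose proof (qform_excess_same y1 s y2 (INR k1) (INR k2) Hs Hs2 Hy Hk1 Hk2). lra.
  - apply (Rle_trans _ (exp (PI * s) * (exp (- (PI * y1)) ^ k1 * exp (- (PI * y1)) ^ k2)));
      [| right; ring].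
    replace (- INR k2 - 1 + 1/2) with (- (INR k2 + 1/2)) by lra.
    apply exp_excess_le.
    pose proof (qform_excess_opposite y1 s y2 (INR k1) (INR k2) Hs Hs2 Hy Hk1 Hk2 Hn1 Hn2). lra.
  - apply (Rle_trans _ (exp (PI * s) * (exp (- (PI * y1)) ^ k1 * exp (- (PI * y1)) ^ k2)));
      [| right; ring].
    replace (- INR k1 - 1 + 1/2) with (- (INR k1 + 1/2)) by lra.
    replace (INR k2 + 1/2) with (- - (INR k2 + 1/2)) by lra. rewrite qform_opp.
    apply exp_excess_le.
    pose proof (qform_excess_opposite y1 s y2 (INR k1) (INR k2) Hs Hs2 Hy Hk1 Hk2 Hn1 Hn2). lra.
  - apply (Rle_trans _ (exp (PI * 0) * (exp (- (PI * y1)) ^ k1 * exp (- (PI * y1)) ^ k2)));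
      [| right; rewrite Rmult_0_r, exp_0; ring].
    replace (- INR k1 - 1 + 1/2) with (- (INR k1 + 1/2)) by lra.
    replace (- INR k2 - 1 + 1/2) with (- (INR k2 + 1/2)) by lra. rewrite qform_opp.
    apply exp_excess_le.
    pose proof (qform_excess_same y1 s y2 (INR k1) (INR k2) Hs Hs2 Hy Hk1 Hk2). lra.
Qed.

Lemma weight_sums_margin (E Q SP SM : R) :
  0 <= Q -> 576 * Q <= 1 -> 1 <= E ->
  0 <= SP <= 1 / (1 - Q) -> 0 <= SM <= 1 / (1 - Q) ->
  2 * (E - 1) - 6 * Q * (E + 1) <= 4 * E - (SP * SP + SM * SM + E * (2 * (SP * SM))).
Proof.
  intros HQ HQs HE HP HM. set (B := 1 / (1 - Q)) in *.
  assert (HB : B * (1 - Q) = 1) by (unfold B; field; lra).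
  assert (HBsq : B * B <= 1 + 3 * Q) by nra.
  assert (SP * SP <= B * B) by nra. assert (SM * SM <= B * B) by nra.
  assert (SP * SM <= B * B) by nra.
  nra.
Qed.

Lemma exp_decay_small (eps y1 : R) :
  0 < eps -> Rmax (1 / eps) 31 <= y1 ->
  18 * exp (- (PI * y1 / 2)) <= eps /\ 576 * exp (- (PI * y1 / 2)) <= 1.
Proof.
  intros Heps Hy.
  assert (Hpi : PI > 3) by (pose proof PI2_3_2; lra).
  pose proof (Rmax_r (1 / eps) 31). pose proof (Rmax_l (1 / eps) 31).
  assert (Hye : 1 <= y1 * eps).
  { assert (Hinv : 1 / eps <= y1) by lra.
    apply (Rmult_le_compat_r eps) in Hinv; [|lra].
    replace (1 / eps * eps) with 1 in Hinv by (field; lra). lra. }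
  set (X := exp (PI * y1 / 4)).
  assert (HX : 1 + PI * y1 / 4 <= X) by apply exp_ineq1_le.
  assert (HwX : exp (- (PI * y1 / 2)) * (X * X) = 1).
  { unfold X. rewrite <- !exp_plus, <- exp_0. f_equal. field. }
  assert (HX24 : 24 <= X) by nra.
  assert (HXX : 18 * y1 <= X * X) by nra.
  pose proof (exp_pos (- (PI * y1 / 2))). split; nra.
Qed.

Lemma dominance_margin (eps y1 s SP SM : R) :
  0 < eps -> eps <= s -> 2 * s <= y1 -> Rmax (1 / eps) 31 <= y1 ->
  0 <= SP <= 1 / (1 - exp (- (PI * y1))) -> 0 <= SM <= 1 / (1 - exp (- (PI * y1))) ->
  Rmin (eps / 2) (31 / 100)
  <= 4 * exp (PI * s) - (SP * SP + SM * SM + exp (PI * s) * (2 * (SP * SM))).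
Proof.
  intros Heps Hs Hs2 Hy HP HM.
  assert (Hpi : PI > 3) by (pose proof PI2_3_2; lra).
  destruct (exp_decay_small eps y1 Heps Hy) as [Hw18 Hw576].
  set (w := exp (- (PI * y1 / 2))) in *.
  set (Q := exp (- (PI * y1))) in *. set (E := exp (PI * s)).
  assert (HQw : Q <= w) by (apply exp_le_compat; nra).
  assert (HEQw : E * Q <= w).
  { unfold E, Q, w. rewrite <- exp_plus. apply exp_le_compat. nra. }
  assert (HE : 1 + PI * s <= E) by apply exp_ineq1_le.
  assert (HQ : 0 <= Q) by (left; apply exp_pos).
  pose proof (weight_sums_margin E Q SP SM HQ ltac:(lra) ltac:(nra) HP HM).
  pose proof (Rmin_l (eps / 2) (31 / 100)). nra.
Qed.

Lemma cnorm_theta_term (a1 a2 b1 b2 : R) (t : Sym2) (n1 n2 : Z) :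
  cnorm (theta_term a1 a2 b1 b2 (cofR 0) (cofR 0) t n1 n2)
  = exp (- (PI * qform (cim (t1 t)) (cim (t12 t)) (cim (t2 t)) (IZR n1 + a1) (IZR n2 + a2))).
Proof.
  unfold theta_term. rewrite cnorm_cexp. f_equal. unfold qform, cmul, cadd, cofR, ci; simpl. field.
Qed.

Lemma theta_term_dominant_pair (b : R) (t : Sym2) :
  theta_term (1/2) (1/2) b b (cofR 0) (cofR 0) t (-1) 0
  = theta_term (1/2) (1/2) b b (cofR 0) (cofR 0) t 0 (-1).
Proof. unfold theta_term. f_equal. unfold cmul, cadd, cofR, ci; simpl. f_equal; field. Qed.

(** Lower bound for every square partial sum of side [2N+1 >= 3], assuming only
    the Minkowski reduction conditions of [F_2] and the hypotheses on [tau]. *)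
Lemma theta_partial_lower (eps : R) (t : Sym2) (b : R) (N : nat) :
  0 < eps -> eps <= cim (t12 t) -> 2 * cim (t12 t) <= cim (t1 t) -> cim (t1 t) <= cim (t2 t) ->
  Rmax (1 / eps) 31 <= cim (t1 t) -> (1 <= N)%nat ->
  Rmin (eps / 2) (31 / 100)
  <= exp (PI * qform (cim (t1 t)) (cim (t12 t)) (cim (t2 t)) (1/2) (1/2))
     * cnorm (theta_partial (1/2) (1/2) b b (cofR 0) (cofR 0) t N).
Proof.
  intros Heps Hs Hs2 Hy2 Hy HN.
  set (y1 := cim (t1 t)) in *. set (s := cim (t12 t)) in *. set (y2 := cim (t2 t)) in *.
  set (K := exp (PI * qform y1 s y2 (1/2) (1/2))).
  set (T := fun i j => theta_term (1/2) (1/2) b b (cofR 0) (cofR 0) t (lattice N i) (lattice N j)).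
  set (m := (2 * N + 1)%nat).
  set (TT := rsum (fun i => rsum (fun j => cnorm (T i j)) m) m).
  set (Q := exp (- (PI * y1))).
  assert (Hdom : T N (N - 1)%nat = theta_term (1/2) (1/2) b b (cofR 0) (cofR 0) t 0 (-1))
    by (unfold T, lattice; f_equal; lia).
  assert (Hrep : T (N - 1)%nat N = T N (N - 1)%nat).
  { rewrite Hdom, <- theta_term_dominant_pair. unfold T, lattice. f_equal; lia. }
  assert (HKu : K * cnorm (T N (N - 1)%nat) = exp (PI * s)).
  { unfold K, y1, s, y2. rewrite Hdom, cnorm_theta_term, <- exp_plus. f_equal.
    unfold qform. simpl. field. }
  pose proof (double_sum_repeated_term T m N (N - 1) (N - 1) N
                ltac:(lia) ltac:(lia) ltac:(lia) ltac:(lia) ltac:(lia) Hrep) as Hlow.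
  assert (HKT : K * TT <= rsum (wplus Q N) m * rsum (wplus Q N) m
                          + rsum (wminus Q N) m * rsum (wminus Q N) m
                          + exp (PI * s) * (2 * (rsum (wplus Q N) m * rsum (wminus Q N) m))).
  { rewrite <- rsum2_split. unfold TT. rewrite <- rsum_scal. apply rsum_le; intros i _.
    rewrite <- rsum_scal. apply rsum_le; intros j _. unfold T, K. rewrite cnorm_theta_term.
    apply (scaled_term_le_weights y1 s y2 Q); [lra | lra | lra | reflexivity]. }
  assert (HQ : 0 <= Q < 1).
  { split; [left; apply exp_pos|]. rewrite <- exp_0. apply exp_increasing.
    pose proof PI_RGT_0. pose proof (Rmax_r (1 / eps) 31). nra. }
  destruct (weight_sums_bound Q N m HQ) as [HP HM].
  pose proof (dominance_margin eps y1 s _ _ Heps Hs Hs2 Hy HP HM).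
  assert (HK : 0 < K) by apply exp_pos.
  apply (Rmult_le_compat_l K) in Hlow; [|lra]. fold TT in Hlow.
  replace (K * (4 * cnorm (T N (N - 1)%nat) - TT))
    with (4 * (K * cnorm (T N (N - 1)%nat)) - K * TT) in Hlow by ring.
  change (theta_partial (1/2) (1/2) b b (cofR 0) (cofR 0) t N)
    with (csum (fun i => csum (T i) m) m).
  lra.
Qed.

Lemma cnorm_limit_lower (S : nat -> Cx) (l : Cx) (K c : R) :
  Un_cv (fun N => cre (S N)) (cre l) -> Un_cv (fun N => cim (S N)) (cim l) ->
  (forall N, (1 <= N)%nat -> c <= K * cnorm (S N)) -> c <= K * cnorm l.
Proof.
  intros Hre Him Hbound.
  assert (Hconst : Un_cv (fun _ => K) K).
  { intros e He. exists O. intros n _. unfold Rdist. rewrite Rminus_diag, Rabs_R0. lra. }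
  assert (Hnorm : Un_cv (fun N => K * cnorm (S N)) (K * cnorm l)).
  { apply CV_mult; [exact Hconst|]. unfold cnorm.
    apply (continuity_seq sqrt (fun N => cre (S N) * cre (S N) + cim (S N) * cim (S N))).
    - apply continuity_pt_sqrt. nra.
    - apply CV_plus; apply CV_mult; assumption. }
  destruct (Rle_lt_dec c (K * cnorm l)) as [Hle|Hlt]; [exact Hle|].
  destruct (Hnorm (c - K * cnorm l) ltac:(lra)) as [N0 HN0].
  specialize (HN0 (max N0 1) ltac:(lia)). specialize (Hbound (max N0 1) ltac:(lia)).
  unfold Rdist in HN0. apply Rabs_def2 in HN0. lra.
Qed.

Theorem mainTheorem15 (eps : R) (t : Sym2) (b1 b2 : R) (th : Cx) :
  0 < eps ->
  in_F2 t ->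
  cim (t12 t) >= eps ->
  cim (t1 t) >= Rmax (1 / eps) 31 ->
  ((b1 = 0 /\ b2 = 0) \/ (b1 = 1/2 /\ b2 = 1/2)) ->
  theta_value (1/2) (1/2) b1 b2 (cofR 0) (cofR 0) t th ->
  cnorm th *
    exp (PI * ((1/2) * (1/2) * cim (t1 t) + 2 * (1/2) * (1/2) * cim (t12 t)
               + (1/2) * (1/2) * cim (t2 t)))
  >= Rmin (eps / 2) (31 / 100).
Proof.
  intros Heps HF Hs Hy Hb [Hre Him].
  destruct HF as [_ [_ [[_ [Hs2 Hy2]] _]]].
  assert (Hb2 : b2 = b1) by (destruct Hb as [[-> ->]|[-> ->]]; reflexivity). subst b2.
  apply Rle_ge. rewrite Rmult_comm.
  apply (cnorm_limit_lower _ _ _ _ Hre Him). intros N HN.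
  apply theta_partial_lower; lra || exact HN.
Qed.
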